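(* Let $\alpha\in[0,1)$, let $n\geq f(\alpha)$, and let $s$ be an integer with $2\leq s\leq\frac{n-1}{3}$. Then $\rho_{\alpha}\big(K_s\vee(K_{n-3s+1}\cup (2s-1)K_1)\big)<\eta(n)$.
   Context: For a graph $G$, $A_{\alpha}(G)=\alpha D(G)+(1-\alpha)A(G)$ where $D(G)$ is the diagonal degree matrix and $A(G)$ the adjacency matrix, and $\rho_{\alpha}(G)$ is the largest eigenvalue of $A_{\alpha}(G)$. $\vee$ denotes join, $\cup$ disjoint union, $K_m$ the complete graph on $m$ vertices, $tK_1$ the edgeless graph on $t$ vertices. Define $f(\alpha)=14$ if $\alpha\in[0,\frac12]$, $f(\alpha)=17$ if $\alpha\in(\frac12,\frac23]$, $f(\alpha)=20$ if $\alpha\in(\frac23,\frac34]$, and $f(\alpha)=\frac{5}{1-\alpha}+1$ if $\alpha\in(\frac34,1)$. $\eta(n)$ is the largest root of $x^{3}-((\alpha+1)n+\alpha-4)x^{2}+(\alpha n^{2}+(\alpha^{2}-2\alpha-1)n-2\alpha+1)x-\alpha^{2}n^{2}+(5\alpha^{2}-3\alpha+2)n-10\alpha^{2}+15\alpha-8=0$. *)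

From mathcomp Require Import all_boot all_order all_algebra.
Set Implicit Arguments. Unset Strict Implicit. Unset Printing Implicit Defensive.
Import Order.TTheory GRing.Theory Num.Theory.
Local Open Scope ring_scope.

(* Simple graphs on vertex set 'I_n are given by a relation e : rel 'I_n
   (assumed symmetric and irreflexive where relevant). *)

Definition adjmx (R : rcfType) (n : nat) (e : rel 'I_n) : 'M[R]_n :=
  \matrix_(i, j) (e i j)%:R.

Definition degmx (R : rcfType) (n : nat) (e : rel 'I_n) : 'M[R]_n :=
  \matrix_(i, j) ((i == j)%:R * (#|[pred k | e i k]|)%:R).

Definition Aalpha (R : rcfType) (n : nat) (alpha : R) (e : rel 'I_n) : 'M[R]_n :=
  alpha *: degmx R e + (1 - alpha) *: adjmx R e.

Definition is_largest_eigenvalue (R : rcfType) (n : nat) (M : 'M[R]_n) (rho : R) :=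
  eigenvalue M rho /\ (forall mu : R, eigenvalue M mu -> mu <= rho).

Definition is_largest_root (R : rcfType) (p : {poly R}) (x : R) :=
  root p x /\ (forall y : R, root p y -> y <= x).

(* The graph K_s \/ (K_{n-3s+1} \cup (2s-1)K_1) on vertex set 'I_n:
   vertices 0..s-1 form K_s, vertices s..n-2s form K_{n-3s+1},
   vertices n-2s+1..n-1 are the (2s-1) isolated vertices of the union;
   every vertex of K_s is joined to every other vertex. *)
Definition join_graph (n s : nat) : rel 'I_n :=
  fun i j => (i != j) &&
    [|| (i < s)%N, (j < s)%N | ((i < n - 2 * s + 1)%N && (j < n - 2 * s + 1)%N)].

Definition fbound (R : rcfType) (alpha : R) : R :=
  if alpha <= 1/2 then 14
  else if alpha <= 2/3 then 17
  else if alpha <= 3/4 then 20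
  else 5 / (1 - alpha) + 1.

Definition eta_poly (R : rcfType) (alpha : R) (n : nat) : {poly R} :=
  let N : R := n%:R in
  'X^3
  - ((alpha + 1) * N + alpha - 4)%:P * 'X^2
  + (alpha * N ^+ 2 + (alpha ^+ 2 - 2 * alpha - 1) * N - 2 * alpha + 1)%:P * 'X
  + (- alpha ^+ 2 * N ^+ 2 + (5 * alpha ^+ 2 - 3 * alpha + 2) * N
     - 10 * alpha ^+ 2 + 15 * alpha - 8)%:P.

Arguments join_graph n s : clear implicits.
Arguments eta_poly {R} alpha n.

From mathcomp Require Import all_boot all_order all_algebra.
From mathcomp Require Import ring lra zify.
From Stdlib Require Import Classical.

Set Implicit Arguments.
Unset Strict Implicit.
Unset Printing Implicit Defensive.

Import Order.TTheory GRing.Theory Num.Theory.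
Local Open Scope ring_scope.

(* The classes K_s, K_(n-3s+1) and (2s-1)K_1 form an equitable partition of
   the graph, so a vector constant on the classes, built from a root rho of the
   cubic of the quotient matrix, is a positive eigenvector of A_alpha; by the
   Perron argument rho is then the largest eigenvalue.  The quotient cubic is
   negative at its middle diagonal entry and positive at n - 13/4, which traps
   such a rho below n - 13/4, whereas the cubic defining eta(n) is negative at
   n - 13/4 and nonnegative at 2n.  The hypothesis n >= f(alpha) is only used
   through n >= 14 and (1 - alpha)(n - 1) >= 19/4. *)

Lemma largest_root_exists (R : rcfType) (p : {poly R}) (x0 : R) :
  p != 0 -> root p x0 -> exists2 x, is_largest_root p x & x0 <= x.
Proof.
elim: (size p) {-2}p (leqnn (size p)) x0 => [|k IH] {}p sp x0 p0 px0.
  by move: p0; rewrite -size_poly_eq0 -leqn0 sp.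
have [x0_max|] := classic (forall y, root p y -> y <= x0); first by exists x0.
move=> /not_all_ex_not [y /(imply_to_and (root p y)) [py /negP]].
rewrite -ltNge => x0y.
have /factor_theorem [q def_p] := px0.
have q0 : q != 0 by apply: contraNneq p0 => q_eq0; rewrite def_p q_eq0 mul0r.
have sq : (size q <= k)%N.
  by move: sp; rewrite def_p size_Mmonic ?monicXsubC // size_XsubC addn2.
have qy : root q y.
  move: py; rewrite def_p rootM root_XsubC => /orP [] // /eqP y_x0.
  by move: x0y; rewrite y_x0 ltxx.
have [x [qx x_max] yx] := IH q sq y q0 qy.
exists x; last exact: le_trans (ltW x0y) yx.
split; first by rewrite def_p rootM qx.
move=> z; rewrite def_p rootM root_XsubC => /orP [/x_max //| /eqP ->].
exact: le_trans (ltW x0y) yx.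
Qed.

Lemma eigenvalue_le_of_pos_eigenvector (R : realFieldType) (n : nat)
    (A : 'M[R]_n) (x : 'rV[R]_n) (rho : R) :
  (forall i j, 0 <= A i j) -> (forall i, 0 < x 0 i) -> x *m A = rho *: x ->
  forall mu, eigenvalue A mu -> mu <= rho.
Proof.
move=> A_ge0 x_gt0 xA mu /eigenvalueP [v vA v0].
have /existsP [k vk0] : [exists k, v 0 k != 0].
  apply: contraNT v0 => /existsPn v_eq0.
  by apply/eqP/rowP => i; rewrite mxE; apply/eqP/negPn/v_eq0.
(* Compare with x at the coordinate j where |v| / x is largest. *)
pose w i := `|v 0 i| / x 0 i.
have [j _ w_max] := @arg_maxP _ _ _ k xpredT w isT.
have v_le i : `|v 0 i| <= w j * x 0 i.
  by rewrite -ler_pdivrMr //; exact: w_max.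
have vj : `|v 0 j| = w j * x 0 j by rewrite /w divfK // gt_eqF.
have vj_gt0 : 0 < `|v 0 j|.
  rewrite vj mulr_gt0 // (lt_le_trans _ (w_max k isT)) //.
  by rewrite divr_gt0 // normr_gt0.
have coord (y : 'rV[R]_n) c :
    y *m A = c *: y -> \sum_i y 0 i * A i j = c * y 0 j.
  by move/(congr1 (fun M : 'rV_n => M 0 j)); rewrite !mxE.
suff : `|mu| * `|v 0 j| <= rho * `|v 0 j|.
  by rewrite ler_pM2r // => /(le_trans (ler_norm mu)).
rewrite -normrM -(coord v mu vA) (le_trans (ler_norm_sum _ _ _)) //.
apply: (@le_trans _ _ (\sum_i w j * (x 0 i * A i j))).
  apply: ler_sum => i _; rewrite normrM (ger0_norm (A_ge0 i j)) mulrA.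
  exact: ler_wpM2r.
by rewrite -mulr_sumr (coord x rho xA) vj mulrCA.
Qed.

Lemma poly_ivt_lt0 (R : rcfType) (p : {poly R}) (a b : R) :
  a <= b -> p.[a] < 0 -> 0 <= p.[b] -> exists2 x, a < x <= b & root p x.
Proof.
move=> ab pa pb.
have [x /andP [ax xb] px] := poly_ivt ab (introT andP (conj (ltW pa) pb)).
exists x => //; rewrite xb andbT lt_neqAle ax andbT.
by apply: contraTneq px => <-; rewrite rootE lt_eqF.
Qed.

Lemma mulmx_Aalpha_coord (R : rcfType) (n : nat) (alpha : R) (e : rel 'I_n)
    (x : 'rV[R]_n) (j : 'I_n) :
  (x *m Aalpha alpha e) 0 j =
  alpha * (#|[pred k | e j k]|%:R * x 0 j)
  + (1 - alpha) * \sum_i (e i j)%:R * x 0 i.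
Proof.
rewrite /Aalpha mulmxDr -!scalemxAr !mxE; congr (_ * _ + _ * _).
  rewrite (bigD1 j) //= big1 ?addr0 => [|i /negbTE ij]; rewrite !mxE ?ij ?eqxx.
    by rewrite mul1r mulrC.
  by rewrite mul0r mulr0.
by apply: eq_bigr => i _; rewrite mxE mulrC.
Qed.

Lemma Aalpha_ge0 (R : rcfType) (n : nat) (a : R) (e : rel 'I_n) :
  0 <= a -> a <= 1 -> forall i j, 0 <= Aalpha a e i j.
Proof.
move=> a0 a1 i j; rewrite /Aalpha /degmx /adjmx !mxE.
by rewrite addr_ge0 ?mulr_ge0 ?ler0n ?subr_ge0.
Qed.

Section CliqueJoin.

Variables (R : rcfType) (n s L : nat).
Hypotheses (sL : (s <= L)%N) (Ln : (L <= n)%N).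

(* K_s \/ (K_(L-s) \cup (n-L)K_1): the blocks are [0, s), [s, L) and [L, n). *)
Definition clique_join : rel 'I_n :=
  fun i j => (i != j) && [|| (i < s)%N, (j < s)%N | (i < L)%N && (j < L)%N].

Definition block_row (x1 x2 x3 : R) : 'rV[R]_n :=
  \row_j (if (j < s)%N then x1 else if (j < L)%N then x2 else x3).

Lemma scale_block_row (c x1 x2 x3 : R) :
  c *: block_row x1 x2 x3 = block_row (c * x1) (c * x2) (c * x3).
Proof. by apply/rowP => j; rewrite !mxE; case: ifP => _; [|case: ifP]. Qed.

Lemma sum_three_blocks (F : nat -> R) :
  \sum_(i < n) F i =
  \sum_(0 <= i < s) F i + \sum_(s <= i < L) F i + \sum_(L <= i < n) F i.
Proof. by rewrite -(big_mkord xpredT) (big_cat_nat _ Ln) //= (big_cat_nat _ sL). Qed.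

Lemma clique_join_neighbour_sum (x1 x2 x3 : R) (j : 'I_n) :
  \sum_i (clique_join i j)%:R * block_row x1 x2 x3 0 i =
  block_row ((s%:R - 1) * x1 + (L - s)%:R * x2 + (n - L)%:R * x3)
            (s%:R * x1 + ((L - s)%:R - 1) * x2) (s%:R * x1) 0 j.
Proof.
pose c (i : nat) := [|| (i < s)%N, (j < s)%N | (i < L)%N && (j < L)%N].
pose b (i : nat) := if (i < s)%N then x1 else if (i < L)%N then x2 else x3.
have cjj : c j = (j < L)%N.
  by rewrite /c andbb; case: ltnP => //= js; rewrite (leq_trans js sL).
have split_diag : \sum_i (clique_join i j)%:R * block_row x1 x2 x3 0 i =
    \sum_(i < n) (c i)%:R * b i - (c j)%:R * b j.
  rewrite [X in X - _](bigD1 j) //= addrAC subrr add0r.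
  rewrite (bigD1 j) //= /clique_join eqxx mul0r add0r.
  by apply: eq_bigr => i ij; rewrite ij mxE.
have sum_s : \sum_(0 <= i < s) (c i)%:R * b i = s%:R * x1.
  rewrite (eq_big_nat _ _ (F2 := fun=> x1));
    first by rewrite sumr_const_nat subn0 mulr_natl.
  by move=> i /andP [_ i_s]; rewrite /c /b i_s mul1r.
have sum_L : \sum_(s <= i < L) (c i)%:R * b i = (L - s)%:R * ((j < L)%N%:R * x2).
  rewrite (eq_big_nat _ _ (F2 := fun=> (j < L)%N%:R * x2));
    first by rewrite sumr_const_nat [RHS]mulr_natl.
  move=> i /andP [si iL]; rewrite /c /b ltnNge si iL /=.
  case: (ltnP j s) => js /=; last by [].
  by rewrite (leq_trans js sL).
have sum_n : \sum_(L <= i < n) (c i)%:R * b i = (n - L)%:R * ((j < s)%N%:R * x3).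
  rewrite (eq_big_nat _ _ (F2 := fun=> (j < s)%N%:R * x3));
    first by rewrite sumr_const_nat [RHS]mulr_natl.
  by move=> i /andP [Li _]; rewrite /c /b !ltnNge (leq_trans sL Li) Li /= orbF.
rewrite split_diag (sum_three_blocks (fun i => (c i)%:R * b i)) sum_s sum_L sum_n cjj.
rewrite /b mxE; case: (ltnP j s) => js.
  by rewrite (leq_trans js sL) /=; ring.
by case: (ltnP j L) => jL /=; ring.
Qed.

Lemma clique_joinC : symmetric clique_join.
Proof.
by move=> i j; rewrite /clique_join eq_sym orbCA [(j < L)%N && _]andbC.
Qed.

Local Notation S := (s%:R : R).
Local Notation M := ((L - s)%:R : R).
Local Notation T := ((n - L)%:R : R).

Lemma clique_join_degree (j : 'I_n) :
  #|[pred k | clique_join j k]|%:R = block_row (S + M + T - 1) (S + M - 1) S 0 j.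
Proof.
have -> : #|[pred k | clique_join j k]|%:R =
    \sum_i (clique_join i j)%:R * block_row 1 1 1 0 i.
  rewrite -sum1_card natr_sum big_mkcond /=; apply: eq_bigr => i _.
  by rewrite inE /block_row mxE clique_joinC !if_same mulr1; case: clique_join.
rewrite clique_join_neighbour_sum /block_row !mxE.
by case: ifP => _; [|case: ifP => _]; ring.
Qed.

Lemma block_row_mul_Aalpha (alpha x1 x2 x3 : R) :
  block_row x1 x2 x3 *m Aalpha alpha clique_join =
  block_row (alpha * ((S + M + T - 1) * x1)
               + (1 - alpha) * ((S - 1) * x1 + M * x2 + T * x3))
            (alpha * ((S + M - 1) * x2) + (1 - alpha) * (S * x1 + (M - 1) * x2))
            (alpha * (S * x3) + (1 - alpha) * (S * x1)).
Proof.
apply/rowP => j.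
rewrite mulmx_Aalpha_coord clique_join_degree clique_join_neighbour_sum.
by rewrite /block_row !mxE; case: ifP => _; [|case: ifP => _].
Qed.

End CliqueJoin.

Lemma quadratic_gt0_increasing (R : realDomainType) (A B C u0 u : R) :
  0 <= A -> 0 <= B -> 0 <= u0 -> u0 <= u ->
  0 < A * u0 ^+ 2 + B * u0 + C -> 0 < A * u ^+ 2 + B * u + C.
Proof.
move=> A0 B0 u00 u0u /lt_le_trans; apply; rewrite lerD2r lerD //.
  by rewrite ler_wpM2l // lerXn2r // nnegrE (le_trans u00 u0u).
exact: ler_wpM2l.
Qed.

Section QuotientCubic.

Variable R : rcfType.

Definition quotient_diag2 (a N S : R) : R := a * (N - 2 * S) + (1 - a) * (N - 3 * S).

(* The characteristic polynomial of the quotient matrix of the equitable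
   partition (K_s, K_(n-3s+1), (2s-1)K_1) of A_alpha, with N = n and S = s. *)
Definition quotient_poly (a N S : R) : {poly R} :=
  ('X - (a * (N - 1) + (1 - a) * (S - 1))%:P) * ('X - (quotient_diag2 a N S)%:P)
    * ('X - (a * S)%:P)
  - ((1 - a) * (N - 3 * S + 1) * ((1 - a) * S))%:P * ('X - (a * S)%:P)
  - ((1 - a) * (2 * S - 1) * ((1 - a) * S))%:P * ('X - (quotient_diag2 a N S)%:P).

Lemma horner_quotient_poly (a N S x : R) : (quotient_poly a N S).[x] =
  (x - (a * (N - 1) + (1 - a) * (S - 1))) * (x - quotient_diag2 a N S) * (x - a * S)
  - (1 - a) * (N - 3 * S + 1) * ((1 - a) * S) * (x - a * S)
  - (1 - a) * (2 * S - 1) * ((1 - a) * S) * (x - quotient_diag2 a N S).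
Proof. by rewrite /quotient_poly !hornerE. Qed.

Lemma quotient_poly_diag2_lt0 (a N S : R) : a < 1 -> 0 < S -> 3 * S < N ->
  (quotient_poly a N S).[quotient_diag2 a N S] < 0.
Proof.
move=> a1 S0 SN.
have -> : (quotient_poly a N S).[quotient_diag2 a N S] =
    - ((1 - a) * (N - 3 * S + 1) * ((1 - a) * S) * (N - 3 * S)).
  by rewrite horner_quotient_poly /quotient_diag2; ring.
by rewrite oppr_lt0 !mulr_gt0 //; lra.
Qed.

Lemma quotient_poly_gt0 (a N S : R) : 14 <= N -> 19/4 <= (1 - a) * (N - 1) ->
  2 <= S -> 3 * S <= N - 1 -> 0 < (quotient_poly a N S).[N - 13/4].
Proof.
move=> N14 uN S2 SN.
(* In the coordinates e, d >= 0 below, the value at N - 13/4 is a quadratic in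
   u = 1 - a with nonnegative leading coefficients; uN says u >= 19/(4(N-1)). *)
set e := N - 3 * S - 1; set d := S - 2; set u := 1 - a.
have e0 : 0 <= e by rewrite /e; lra.
have d0 : 0 <= d by rewrite /d; lra.
have ed7 : 7 <= 3 * d + e by rewrite /e /d; lra.
have mono k l : 0 <= e ^+ k * d ^+ l by rewrite mulr_ge0 ?exprn_ge0.
have w_eq : N - 1 = 6 + 3 * d + e by rewrite /e /d; ring.
have w_gt0 : 0 < 6 + 3 * d + e by lra.
pose cA := 4*e*d^+2 + 47/4*e*d + 15/2*e + 4*d^+3 + 77/4*d^+2 + 99/4*d + 9/2.
pose cB := 2*e^+2*d + 3/4*e^+2 + 8*e*d^+2 + 57/4*e*d + 9/16*e + 8*d^+3 + 21*d^+2
  + 4*d - 75/16.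
pose cC := - (9/2*e*d) - 27/16*e - 9*d^+2 - 45/4*d - 189/64.
have -> : (quotient_poly a N S).[N - 13/4] = cA * u ^+ 2 + cB * u + cC.
  by rewrite horner_quotient_poly /quotient_diag2 /cA /cB /cC /e /d /u; field.
apply: (@quadratic_gt0_increasing _ _ _ _ (19/4 / (6 + 3 * d + e))).
- have := mono 1 1; have := mono 1 2; have := mono 0 2; have := mono 0 3.
  by rewrite /cA !expr0 !expr1 !mul1r; lra.
- have := mono 1 1; have := mono 1 2; have := mono 0 2; have := mono 0 3.
  have := mono 2 1.
  have : 49 <= e ^+ 2 + 6 * (e * d) + 9 * d ^+ 2.
    have : 0 <= (3 * d + e - 7) * (3 * d + e + 7) by rewrite mulr_ge0 //; lra.
    by rewrite !expr2; lra.
  by rewrite /cB !expr0 !expr1 !mul1r !expr2; lra.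
- by rewrite divr_ge0 //; lra.
- by rewrite ler_pdivrMr // -w_eq.
have -> : cA * (19/4 / (6 + 3 * d + e)) ^+ 2 + cB * (19/4 / (6 + 3 * d + e)) + cC =
    (5*(e^+3*d^+1) + 15/8*(e^+3*d^+0) + 61/2*(e^+2*d^+2) + 60*(e^+2*d^+1)
     + 27/32*(e^+2*d^+0) + 115/2*(e^+1*d^+3) + 2147/8*(e^+1*d^+2)
     + 10329/32*(e^+1*d^+1) + 4275/64*e + 33*(e^+0*d^+4) + 769/4*(e^+0*d^+3)
     + 1337/4*(e^+0*d^+2) + 1509/16*d - 1107/8) / (6 + 3 * d + e) ^+ 2.
  by rewrite /cA /cB /cC; field; lra.
rewrite divr_gt0 ?exprn_gt0 //.
have := mono 3 1; have := mono 3 0; have := mono 2 2; have := mono 2 1;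
have := mono 2 0; have := mono 1 3; have := mono 1 2; have := mono 1 1;
have := mono 0 4; have := mono 0 3; have := mono 0 2.
lra.
Qed.

End QuotientCubic.

Section EtaCubic.

Variables (R : rcfType) (a : R) (n : nat).
Local Notation N := (n%:R : R).

Lemma horner_eta_poly (x : R) : (eta_poly a n).[x] =
  x ^+ 3 - ((a + 1) * N + a - 4) * x ^+ 2
  + (a * N ^+ 2 + (a ^+ 2 - 2 * a - 1) * N - 2 * a + 1) * x
  + (- a ^+ 2 * N ^+ 2 + (5 * a ^+ 2 - 3 * a + 2) * N - 10 * a ^+ 2 + 15 * a - 8).
Proof. by rewrite /eta_poly !hornerE. Qed.

Lemma eta_poly_lt0 : 0 <= a -> a < 1 -> 19/4 <= (1 - a) * (N - 1) ->
  (eta_poly a n).[N - 13/4] < 0.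
Proof.
move=> a0 a1 uN; set u := 1 - a in uN *.
have u0 : 0 < u by rewrite /u; lra.
have u1 : u <= 1 by rewrite /u; lra.
have uu : u ^+ 2 <= u by rewrite expr2; apply: ler_piMl; lra.
have -> : (eta_poly a n).[N - 13/4] =
    - (N * (u * N / 4 - (9/16 - 15/16 * u + 7/4 * u ^+ 2)))
    + (-153/64 + 145/16 * u - 10 * u ^+ 2).
  by rewrite horner_eta_poly /u; field.
have : 0 <= N * (u * N / 4 - (9/16 - 15/16 * u + 7/4 * u ^+ 2)).
  have uN1 : 19/4 + u <= u * N by move: uN; rewrite mulrBr mulr1; lra.
  by rewrite mulr_ge0 ?ler0n //; lra.
have : 0 <= (u - 29/64) ^+ 2 := sqr_ge0 _.
by rewrite !expr2; nra.
Qed.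

Lemma eta_poly_ge0 : 0 <= a -> a < 1 -> 14 <= N -> 0 <= (eta_poly a n).[2 * N].
Proof.
move=> a0 a1 n14.
have -> : (eta_poly a n).[2 * N] =
    N ^+ 3 * (4 - 2 * a) + N ^+ 2 * (14 - 8 * a + a ^+ 2)
    + N * (4 - 7 * a + 5 * a ^+ 2) + (-8 + 15 * a - 10 * a ^+ 2).
  by rewrite horner_eta_poly; ring.
have aa : a ^+ 2 <= a by rewrite expr2; apply: ler_piMl; lra.
have a2 : 0 <= a ^+ 2 := sqr_ge0 a.
have N2 : 14 * N <= N ^+ 2 by rewrite expr2 ler_wpM2r //; lra.
have N3 : 14 * N ^+ 2 <= N ^+ 3 by rewrite exprS ler_wpM2r ?sqr_ge0.
have : 2 * N ^+ 3 <= N ^+ 3 * (4 - 2 * a).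
  by rewrite mulrC ler_wpM2l ?exprn_ge0 //; lra.
have : 0 <= N ^+ 2 * (14 - 8 * a + a ^+ 2) by rewrite mulr_ge0 ?sqr_ge0 //; lra.
have : 0 <= N * (4 - 7 * a + 5 * a ^+ 2).
  rewrite mulr_ge0 ?ler0n //.
  have : 0 <= (a - 7/10) ^+ 2 := sqr_ge0 _.
  by rewrite !expr2; nra.
lra.
Qed.

End EtaCubic.

Lemma fbound_ge (R : rcfType) (a N : R) : 0 <= a -> a < 1 -> fbound a <= N ->
  14 <= N /\ 19/4 <= (1 - a) * (N - 1).
Proof.
move=> a0 a1; rewrite /fbound.
have mul_le (u M : R) : 0 <= u -> 0 <= M -> u <= 1 - a -> M <= N - 1 ->
    u * M <= (1 - a) * (N - 1) by move=> *; exact: ler_pM.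
case: ifP => [a_le fN|_].
  by split; [lra | apply: le_trans (mul_le (1/2) 13 _ _ _ _); lra].
case: ifP => [a_le fN|_].
  by split; [lra | apply: le_trans (mul_le (1/3) 16 _ _ _ _); lra].
case: ifP => [a_le fN|/negbT].
  by split; [lra | apply: le_trans (mul_le (1/4) 19 _ _ _ _); lra].
rewrite -ltNge => a_gt fN.
have u_gt0 : 0 < 1 - a by lra.
have : 5 <= (N - 1) * (1 - a) by rewrite -ler_pdivrMr //; lra.
have : 20 <= 5 / (1 - a) by rewrite ler_pdivlMr //; lra.
lra.
Qed.

Lemma join_graph_largest_eigenvalue (R : rcfType) (a rho : R) (n s : nat) :
  0 <= a -> a < 1 -> (0 < s)%N -> (3 * s < n)%N ->
  quotient_diag2 a n%:R s%:R < rho -> root (quotient_poly a n%:R s%:R) rho ->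
  is_largest_eigenvalue (Aalpha a (join_graph n s)) rho.
Proof.
move=> a0 a1 s_gt0 sn d2_lt /eqP rho_root.
set L := (n - 2 * s + 1)%N.
have sL : (s <= L)%N by lia.
have Ln : (L <= n)%N by lia.
have eM : (L - s)%:R = n%:R - 3 * s%:R + 1 :> R.
  have -> : (L - s = (n + 1) - 3 * s)%N by lia.
  by rewrite natrB ?natrD ?natrM; [ring | lia].
have eT : (n - L)%:R = 2 * s%:R - 1 :> R.
  have -> : (n - L = 2 * s - 1)%N by lia.
  by rewrite natrB ?natrM; [ring | lia].
have S_gt0 : 0 < s%:R :> R by rewrite ltr0n.
have SN : 3 * s%:R < n%:R :> R by rewrite -natrM ltr_nat.
have d3_lt : a * s%:R < rho by move: d2_lt; rewrite /quotient_diag2; lra.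
(* The Perron vector is constant on the three blocks; its block values solve
   the quotient eigenproblem at the root rho. *)
pose d2 := rho - quotient_diag2 a n%:R s%:R; pose d3 := rho - a * s%:R.
pose x := block_row n s L (d2 * d3) ((1 - a) * s%:R * d3) ((1 - a) * s%:R * d2).
have x_gt0 i : 0 < x 0 i.
  by rewrite /x /block_row mxE /d2 /d3; case: ifP => _; [|case: ifP => _];
    rewrite !mulr_gt0 //; lra.
have xA : x *m Aalpha a (join_graph n s) = rho *: x.
  rewrite (block_row_mul_Aalpha sL Ln) eM eT scale_block_row /d2 /d3.
  congr block_row; rewrite /quotient_diag2; try ring.
  apply/eqP; rewrite -subr_eq0 -oppr_eq0 -rho_root horner_quotient_poly.
  by apply/eqP; rewrite /quotient_diag2; ring.
split.
  apply/eigenvalueP; exists x => //; apply/eqP => x0.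
  by have := x_gt0 (Ordinal (leq_ltn_trans (leq0n _) sn)); rewrite x0 mxE ltxx.
exact: eigenvalue_le_of_pos_eigenvector (Aalpha_ge0 _ a0 (ltW a1)) x_gt0 xA.
Qed.

Theorem mainTheorem5 (R : rcfType) (alpha : R) (n s : nat) :
  0 <= alpha -> alpha < 1 ->
  fbound alpha <= n%:R ->
  (2 <= s)%N -> (3 * s <= n - 1)%N ->
  exists rho : R, is_largest_eigenvalue (Aalpha alpha (join_graph n s)) rho /\
  exists eta : R, is_largest_root (eta_poly alpha n) eta /\ rho < eta.
Proof.
move=> a0 a1 f_le s2 sn.
have [N14 uN] := fbound_ge a0 a1 f_le.
have S2 : 2 <= s%:R :> R by rewrite (ler_nat R 2).
have SN : 3 * s%:R <= n%:R - 1 :> R.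
  have : ((3 * s).+1 <= n)%N by lia.
  by rewrite -(ler_nat R) -addn1 natrD natrM; lra.
have [rho /andP [d2_lt rho_le] rho_root] :
    exists2 rho, quotient_diag2 alpha n%:R s%:R < rho <= n%:R - 13/4
      & root (quotient_poly alpha n%:R s%:R) rho.
  apply: poly_ivt_lt0; last exact: ltW (quotient_poly_gt0 N14 uN S2 SN).
    by rewrite /quotient_diag2; have := ler_piMl (ler0n R s) (ltW a1); lra.
  by apply: quotient_poly_diag2_lt0 => //; lra.
exists rho; split.
  by apply: join_graph_largest_eigenvalue => //; lia.
have [y /andP [y_gt _] eta_y] :
    exists2 y, n%:R - 13/4 < y <= 2 * n%:R & root (eta_poly alpha n) y.
  by apply: poly_ivt_lt0; [lra | exact: eta_poly_lt0 | exact: eta_poly_ge0].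
have [|eta eta_max y_le] := largest_root_exists _ eta_y.
  by apply: contraTneq (eta_poly_lt0 a0 a1 uN) => ->; rewrite horner0 ltxx.
by exists eta; split => //; lra.
Qed.
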